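(* Let $A,G\in\mathbb{R}^{d\times d}$ be symmetric positive definite, let $u\in\mathbb{R}^d\setminus\{0\}$, and let $G_+=\mathrm{BFGS}(A,G,u)$. Let $\xi\ge1$ be a constant such that $\frac1\xi A\preceq G$ and $\theta(A,G,u)\le\xi$. Then $$\sigma(A,G)-\sigma(A,G_+)\ge\frac{1}{4\xi^2}\theta^2(A,G,u)-\ln\xi.$$
   Context: $\mathrm{BFGS}(A,G,u):=G-\frac{Guu^\top G}{u^\top Gu}+\frac{Auu^\top A}{u^\top Au}$; $\sigma(A,G):=\mathrm{Tr}(A^{-1}G)-d$; $\theta(A,G,u):=\left(\frac{u^\top (G-A)A^{-1}(G-A)u}{u^\top GA^{-1}Gu}\right)^{1/2}$. *)

From HB Require Import structures.
From mathcomp Require Import all_boot all_order all_algebra.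
From mathcomp Require Import all_classical all_reals all_analysis.
Set Implicit Arguments. Unset Strict Implicit. Unset Printing Implicit Defensive.
Import Order.TTheory GRing.Theory Num.Theory.
Local Open Scope ring_scope.

Section Defs.
Variable R : realType.
Variable d : nat.

Definition bform (M : 'M[R]_d) (x y : 'cV[R]_d) : R := (x^T *m M *m y) 0 0.

Definition symmetric_mx (M : 'M[R]_d) : Prop := M^T = M.

Definition posdef (M : 'M[R]_d) : Prop :=
  symmetric_mx M /\ forall x : 'cV[R]_d, x != 0 -> 0 < bform M x x.

Definition possemidef (M : 'M[R]_d) : Prop :=
  symmetric_mx M /\ forall x : 'cV[R]_d, 0 <= bform M x x.

Definition loewner_le (M N : 'M[R]_d) : Prop := possemidef (N - M).

Definition BFGS (A G : 'M[R]_d) (u : 'cV[R]_d) : 'M[R]_d :=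
  G - (bform G u u)^-1 *: (G *m u *m u^T *m G)
    + (bform A u u)^-1 *: (A *m u *m u^T *m A).

Definition sigma (A G : 'M[R]_d) : R := \tr (invmx A *m G) - d%:R.

Definition theta (A G : 'M[R]_d) (u : 'cV[R]_d) : R :=
  Num.sqrt (bform ((G - A) *m invmx A *m (G - A)) u u
            / bform (G *m invmx A *m G) u u).

End Defs.

(* Write a := u'Au, g := u'Gu and w := u'GA^-1Gu.  A trace computation gives
   sigma(A,G) - sigma(A,G_+) = w/g - 1 and theta^2 = (w - 2g + a)/w.  The
   Loewner hypothesis gives a <= xi g, and Cauchy-Schwarz for the inner product
   of A, applied to u and A^-1Gu, gives g^2 <= a w.  Bounding ln xi from below
   by 2(1 - xi^(-1/2)), the claim becomes a polynomial inequality in a, g, w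
   and sqrt xi, which holds under these two constraints. *)
From HB Require Import structures.
From mathcomp Require Import all_boot all_order all_algebra.
From mathcomp Require Import all_classical all_reals all_analysis.
From mathcomp Require Import ring lra.
Set Implicit Arguments. Unset Strict Implicit. Unset Printing Implicit Defensive.
Import Order.TTheory GRing.Theory Num.Theory.
Local Open Scope ring_scope.

Section BilinearForm.
Variables (R : realType) (d : nat).
Implicit Types (M N : 'M[R]_d) (x y z : 'cV[R]_d).

Lemma bformDM M N x y : bform (M + N) x y = bform M x y + bform N x y.
Proof. by rewrite /bform mulmxDr mulmxDl mxE. Qed.

Lemma bformBM M N x y : bform (M - N) x y = bform M x y - bform N x y.
Proof. by rewrite /bform mulmxBr mulmxBl !mxE. Qed.

Lemma bformZM c M x y : bform (c *: M) x y = c * bform M x y.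
Proof. by rewrite /bform -scalemxAr -scalemxAl mxE. Qed.

Lemma bform0l M y : bform M 0 y = 0.
Proof. by rewrite /bform trmx0 !mul0mx mxE. Qed.

Lemma bformDl M x y z : bform M (x + y) z = bform M x z + bform M y z.
Proof. by rewrite /bform linearD /= !mulmxDl mxE. Qed.

Lemma bformDr M x y z : bform M z (x + y) = bform M z x + bform M z y.
Proof. by rewrite /bform !mulmxDr mxE. Qed.

Lemma bformZl M c x y : bform M (c *: x) y = c * bform M x y.
Proof. by rewrite /bform linearZ /= -!scalemxAl mxE. Qed.

Lemma bformZr M c x y : bform M x (c *: y) = c * bform M x y.
Proof. by rewrite /bform -!scalemxAr mxE. Qed.

Lemma bform_mulmxr M N x y : bform M x (N *m y) = bform (M *m N) x y.
Proof. by rewrite /bform !mulmxA. Qed.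

Lemma bformC M x y : symmetric_mx M -> bform M x y = bform M y x.
Proof.
move=> hM; rewrite /bform.
have -> : (x^T *m M *m y) 0 0 = ((x^T *m M *m y)^T) 0 0 by rewrite [RHS]mxE.
by rewrite !trmx_mul trmxK hM mulmxA.
Qed.

Lemma posdef_unitmx M : posdef M -> M \in unitmx.
Proof.
case=> _ hp; rewrite unitmxE unitfE; apply/negP => /det0P [v v0 hv].
have : 0 < bform M v^T v^T by apply: hp; rewrite trmx_eq0.
by rewrite /bform trmxK hv mul0mx mxE ltxx.
Qed.

Lemma posdef_bform_ge0 M z : posdef M -> 0 <= bform M z z.
Proof.
case=> _ hp; have [->|z0] := eqVneq z 0; first by rewrite bform0l.
exact/ltW/hp.
Qed.

Lemma loewner_le_bform M N x : loewner_le M N -> bform M x x <= bform N x x.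
Proof. by case=> _ /(_ x); rewrite bformBM subr_ge0. Qed.

Lemma posdef_cauchy_schwarz M x y :
  posdef M -> bform M x y ^+ 2 <= bform M x x * bform M y y.
Proof.
move=> hM; have [->|x0] := eqVneq x 0; first by rewrite !bform0l expr0n mul0r.
set a := bform M x x; set b := bform M x y; set c := bform M y y.
have a0 : 0 < a by apply: (proj2 hM).
have := posdef_bform_ge0 (b *: x + (- a) *: y) hM.
rewrite !(bformDl, bformDr, bformZl, bformZr) -/a -/b -/c bformC -/b; last exact: (proj1 hM).
nra.
Qed.

Lemma mxtrace_mul_trmx x y : \tr (x *m y^T) = (y^T *m x) 0 0.
Proof. by rewrite mxtrace_mulC trace_mx11. Qed.

Section BFGSUpdate.
Variables (A G : 'M[R]_d) (u : 'cV[R]_d).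
Hypotheses (A_unit : A \in unitmx) (A_sym : symmetric_mx A) (G_sym : symmetric_mx G).

Lemma sigma_sub_BFGS :
  bform G u u != 0 -> bform A u u != 0 ->
  sigma A G - sigma A (BFGS A G u) =
    bform (G *m invmx A *m G) u u / bform G u u - 1.
Proof.
move=> g0 a0; rewrite /sigma /BFGS !(mulmxDr, mulmxN) -!scalemxAr.
have -> : invmx A *m (G *m u *m u^T *m G) = invmx A *m G *m u *m (G *m u)^T.
  by rewrite trmx_mul G_sym !mulmxA.
have -> : invmx A *m (A *m u *m u^T *m A) = u *m (A *m u)^T.
  by rewrite trmx_mul A_sym !mulmxA mulVmx // mul1mx.
rewrite !(mxtraceD, mxtraceZ, linearB, linearN) /= !mxtraceZ !mxtrace_mul_trmx.
rewrite !trmx_mul G_sym A_sym !mulmxA -/(bform A u u) mulVf //.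
have -> : (u^T *m G *m invmx A *m G *m u) 0 0 = bform (G *m invmx A *m G) u u.
  by rewrite /bform !mulmxA.
by field.
Qed.

Lemma bform_theta_numerator :
  bform ((G - A) *m invmx A *m (G - A)) u u =
    bform (G *m invmx A *m G) u u - 2 * bform G u u + bform A u u.
Proof.
have -> : (G - A) *m invmx A *m (G - A) = G *m invmx A *m G - G - G + A.
  rewrite !(mulmxBl, mulmxBr) -!(mulmxA _ (invmx A) A) mulVmx // !mulmx1.
  by rewrite mulmxV // mul1mx opprB addrA [LHS]addrAC.
by rewrite bformDM !bformBM; ring.
Qed.

Lemma bform_sqr_le_GinvAG : posdef A ->
  bform G u u ^+ 2 <= bform A u u * bform (G *m invmx A *m G) u u.
Proof.
move=> hA; set v := invmx A *m (G *m u).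
have Auv : bform A u v = bform G u u.
  by rewrite !bform_mulmxr mulmxV // mul1mx.
have Avv : bform A v v = bform (G *m invmx A *m G) u u.
  by rewrite {2}/v !bform_mulmxr mulmxV // mul1mx bformC // !bform_mulmxr.
by rewrite -Auv -Avv; apply: posdef_cauchy_schwarz.
Qed.

End BFGSUpdate.
End BilinearForm.

Lemma ln_sqr_ge (R : realType) (r : R) : 0 < r -> 2 * (1 - r^-1) <= ln (r ^+ 2).
Proof.
move=> r0; have ri : 0 < r^-1 by rewrite invr_gt0.
have := @le_ln1Dx R (r^-1 - 1) ltac:(lra).
by rewrite addrC subrK lnV ?posrE // lnXn // mulr2n; lra.
Qed.

Lemma bfgs_scalar_bound (R : realFieldType) (a g w r : R) :
  0 < a -> 0 < g -> 0 < w -> 1 <= r -> a <= r^+2 * g -> g^+2 <= a * w ->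
  (4 * (r^+2)^+2)^-1 * ((w - 2 * g + a) / w) <= w / g - 1 + 2 * (1 - r^-1).
Proof.
move=> a0 g0 w0 r1 ha hg; have r0 : 0 < r by lra.
have gw : g <= r^+2 * w.
  have : g * g <= g * (r^+2 * w) by nra.
  by rewrite ler_pM2l.
have r3 : 0 <= (r - 1)^+3 * (3 * r + 1) by apply: mulr_ge0; [apply: exprn_ge0|]; lra.
rewrite -subr_ge0.
(* Every factor in the numerator is nonnegative since r >= 1, g <= r^2 w and a <= r^2 g. *)
have -> : w / g - 1 + 2 * (1 - r^-1) - (4 * (r^+2)^+2)^-1 * ((w - 2 * g + a) / w)
  = (r * (g * w * ((r - 1)^+3 * (3 * r + 1))
          + (r^+2 * w - g) * (4 * r^+2 * w + (r^+2 - 2) * g))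
     + g * r * (r^+2 * g - a)) / (4 * r^+5 * w * g).
  by field; rewrite ?gt_eqF // ?pmulr_rgt0 ?exprn_gt0.
apply: divr_ge0; last by apply: ltW; rewrite !pmulr_rgt0 ?exprn_gt0.
have P : 0 <= 4 * r^+2 * w + (r^+2 - 2) * g by nra.
apply: addr_ge0; apply: mulr_ge0; [lra| |apply: mulr_ge0; lra|lra].
by apply: addr_ge0; apply: mulr_ge0 => //; [apply: mulr_ge0|]; lra.
Qed.

Theorem lemma7 (R : realType) (d : nat) (A G : 'M[R]_d) (u : 'cV[R]_d)
  (xi : R) :
  posdef A -> posdef G -> u != 0 -> 1 <= xi ->
  loewner_le (xi^-1 *: A) G -> theta A G u <= xi ->
  sigma A G - sigma A (BFGS A G u)
    >= (4 * xi ^+ 2)^-1 * theta A G u ^+ 2 - ln xi.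
Proof.
move=> hA hG u0 xi1 hL _.
have Au := posdef_unitmx hA.
have [A_sym A_pos] := hA; have [G_sym G_pos] := hG.
set a := bform A u u; set g := bform G u u; set w := bform (G *m invmx A *m G) u u.
have a0 : 0 < a by apply: A_pos.
have g0 : 0 < g by apply: G_pos.
set r := Num.sqrt xi.
have xir : xi = r ^+ 2 by rewrite sqr_sqrtr //; lra.
have r1 : 1 <= r by rewrite -sqrtr1 ler_sqrt //; lra.
have ag : a <= r ^+ 2 * g.
  have := loewner_le_bform u hL; rewrite bformZM -/a -/g -xir.
  by rewrite ler_pdivrMl //; lra.
have gaw : g ^+ 2 <= a * w by exact: bform_sqr_le_GinvAG.
have w0 : 0 < w by nra.
have num0 : 0 <= w - 2 * g + a.
  have : 0 <= (w - 2 * g + a) * (w + 2 * g + a) by have := sqr_ge0 (w - a); nra.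
  by rewrite pmulr_lge0 //; lra.
have theta2 : theta A G u ^+ 2 = (w - 2 * g + a) / w.
  by rewrite /theta bform_theta_numerator // sqr_sqrtr // divr_ge0 // ltW.
rewrite sigma_sub_BFGS ?gt_eqF //.
rewrite theta2 -/g -/w xir.
have := ln_sqr_ge (lt_le_trans ltr01 r1).
have := bfgs_scalar_bound a0 g0 w0 r1 ag gaw.
lra.
Qed.
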